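(* Let $\{S(u,v),S_1(u_1,v_1)\}$ be Bertrand pair surfaces with $\{x,x_1\}$ a Bertrand D-pair ($x$ on $S$, $x_1$ on $S_1$). Let $(k_g)_1,(k_g)_2$ be the geodesic curvatures of the parametric curves of $S(u,v)$ and $(k_{g_1})_1,(k_{g_1})_2$ those of the parametric curves of $S_1(u_1,v_1)$. Let $\sigma$ be the angle between $x(s)$ and the parametric curve $v=\text{const}$ of $S$, and $\sigma_1$ the angle between $x_1(s_1)$ and the parametric curve $v_1=\text{const}$ of $S_1$. Then $$\Big(\tfrac{d\sigma}{ds} + (k_g)_1 \cos\sigma + (k_g)_2\sin\sigma\Big) - \Big(\tfrac{d\sigma_1}{ds_1} + (k_{g_1})_1\cos\sigma_1 + (k_{g_1})_2\sin\sigma_1\Big) = \lambda\Big[\Big(\tfrac{d\sigma}{ds} + (k_g)_1\cos\sigma + (k_g)_2\sin\sigma\Big)\Big(\tfrac{d\sigma_1}{ds_1} + (k_{g_1})_1\cos\sigma_1 + (k_{g_1})_2\sin\sigma_1\Big) - \tau_g\tau_{g_1}\Big].$$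
   Context: For a unit-speed curve $x(s)$ on an oriented surface $S\subset\mathbb{E}^3$, the Darboux frame is $\{T,g,n\}$ ($T$ unit tangent, $n$ unit surface normal along the curve, $g=n\times T$), with $\dot T = k_g g + k_n n$, $\dot g = -k_g T + \tau_g n$, $\dot n = -k_n T - \tau_g g$; $k_g,k_n,\tau_g$ are the geodesic curvature, normal curvature and geodesic torsion. For $x_1(s_1)$ on $S_1$ the analogous objects carry subscript $1$. $\{x,x_1\}$ is a Bertrand D-pair if there is a correspondence of points such that at corresponding points $g$ coincides with $g_1$; then $\{S,S_1\}$ are called Bertrand pair surfaces, and $x(s)=x_1(s_1)+\lambda g_1(s_1)$ at corresponding points with $\lambda$ a nonzero constant. *)

From Stdlib Require Import Reals.
From Coquelicot Require Import Coquelicot.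
Open Scope R_scope.

Definition V3 : Type := (R * R * R)%type.
Definition c1 (w : V3) : R := fst (fst w).
Definition c2 (w : V3) : R := snd (fst w).
Definition c3 (w : V3) : R := snd w.
Definition zero3 : V3 := (0, 0, 0).
Definition vadd (a b : V3) : V3 := (c1 a + c1 b, c2 a + c2 b, c3 a + c3 b).
Definition vscale (k : R) (a : V3) : V3 := (k * c1 a, k * c2 a, k * c3 a).
Definition dot (a b : V3) : R := c1 a * c1 b + c2 a * c2 b + c3 a * c3 b.
Definition cross (a b : V3) : V3 :=
  (c2 a * c3 b - c3 a * c2 b, c3 a * c1 b - c1 a * c3 b, c1 a * c2 b - c2 a * c1 b).
Definition vnorm (a : V3) : R := sqrt (dot a a).
Definition vunit (a : V3) : V3 := vscale (/ vnorm a) a.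

Definition vD (f : R -> V3) (t : R) : V3 :=
  (Derive (fun t => c1 (f t)) t, Derive (fun t => c2 (f t)) t,
   Derive (fun t => c3 (f t)) t).

Definition pu (X : R -> R -> V3) (u v : R) : V3 := vD (fun t => X t v) u.
Definition pv (X : R -> R -> V3) (u v : R) : V3 := vD (fun t => X u t) v.

Definition diff2 (f : R -> R -> R) (u v : R) : Prop :=
  differentiable_pt_lim f u v (Derive (fun t => f t v) u) (Derive (fun t => f u t) v).
Definition vdiff2 (F : R -> R -> V3) (u v : R) : Prop :=
  diff2 (fun a b => c1 (F a b)) u v /\ diff2 (fun a b => c2 (F a b)) u v /\
  diff2 (fun a b => c3 (F a b)) u v.

Definition regular_surface (X : R -> R -> V3) (D : R * R -> Prop) : Prop :=
  open D /\
  forall u v, D (u, v) ->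
    vdiff2 X u v /\ vdiff2 (pu X) u v /\ vdiff2 (pv X) u v /\
    cross (pu X u v) (pv X u v) <> zero3.

(* the parametric curves are orthogonal (F = 0), as required by Liouville's formula *)
Definition orthogonal_param (X : R -> R -> V3) (D : R * R -> Prop) : Prop :=
  forall u v, D (u, v) -> dot (pu X u v) (pv X u v) = 0.

Definition snormal (X : R -> R -> V3) (u v : R) : V3 :=
  vunit (cross (pu X u v) (pv X u v)).

(* geodesic curvature of the parametric curves through (u,v):
   for a regular curve c on S, k_g = <c'', n x c'> / |c'|^3 *)
Definition kg_u (X : R -> R -> V3) (u v : R) : R :=
  dot (vD (fun t => pu X t v) u) (cross (snormal X u v) (pu X u v))
  / (vnorm (pu X u v)) ^ 3.
Definition kg_v (X : R -> R -> V3) (u v : R) : R :=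
  dot (vD (fun t => pv X u t) v) (cross (snormal X u v) (pv X u v))
  / (vnorm (pv X u v)) ^ 3.

Definition curve (X : R -> R -> V3) (u v : R -> R) (s : R) : V3 := X (u s) (v s).
Definition tangent X u v (s : R) : V3 := vD (curve X u v) s.
Definition cnormal X u v (s : R) : V3 := snormal X (u s) (v s).
Definition cbinormal X u v (s : R) : V3 :=
  cross (cnormal X u v s) (tangent X u v s).
(* T' = k_g g + k_n n,  g' = -k_g T + tau_g n *)
Definition geod_curv X u v (s : R) : R :=
  dot (vD (tangent X u v) s) (cbinormal X u v s).
Definition geod_tors X u v (s : R) : R :=
  dot (vD (cbinormal X u v) s) (cnormal X u v s).

Definition unit_speed_curve_on (X : R -> R -> V3) (D : R * R -> Prop)
    (I : R -> Prop) (u v : R -> R) : Prop :=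
  open I /\
  forall s, I s ->
    D (u s, v s) /\ ex_derive u s /\ ex_derive v s /\
    ex_derive (Derive u) s /\ ex_derive (Derive v) s /\
    vnorm (tangent X u v s) = 1.

Definition angle_fn (X : R -> R -> V3) (u v : R -> R) (I : R -> Prop)
    (sigma : R -> R) : Prop :=
  forall s, I s ->
    ex_derive sigma s /\
    cos (sigma s) = dot (tangent X u v s) (vunit (pu X (u s) (v s))) /\
    sin (sigma s) = dot (tangent X u v s) (vunit (pv X (u s) (v s))).

Definition liouville (X : R -> R -> V3) (u v sigma : R -> R) (s : R) : R :=
  Derive sigma s + kg_u X (u s) (v s) * cos (sigma s)
                 + kg_v X (u s) (v s) * sin (sigma s).

Definition bertrand_D_pair (X : R -> R -> V3) (u v : R -> R) (I : R -> Prop)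
    (X1 : R -> R -> V3) (u1 v1 : R -> R) (I1 : R -> Prop)
    (phi : R -> R) (lam : R) : Prop :=
  lam <> 0 /\
  forall s, I s ->
    I1 (phi s) /\ ex_derive phi s /\
    cbinormal X u v s = cbinormal X1 u1 v1 (phi s) /\
    curve X u v s = vadd (curve X1 u1 v1 (phi s)) (vscale lam (cbinormal X1 u1 v1 (phi s))).

From Stdlib Require Import Reals Lra.
From Coquelicot Require Import Coquelicot.
Open Scope R_scope.

(* By Liouville's formula each bracket is the geodesic curvature k_g = <T', g> = -<g', T> of the
   corresponding curve.  Differentiating x = x1 + lam g1 along the correspondence s1 = phi(s) gives
   T = phi' (T1 + lam g1') and g' = phi' g1', where g1' = -k_g1 T1 + tau_g1 n1.  Hence
   k_g = -phi'^2 (-k_g1 + lam (k_g1^2 + tau_g1^2)) and tau_g = phi'^2 tau_g1, while |T| = 1 reads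
   phi'^2 (1 - 2 lam k_g1 + lam^2 (k_g1^2 + tau_g1^2)) = 1; the claimed identity is an algebraic
   consequence of these three relations. *)

(** * Vector algebra in E^3 *)

Ltac vsimpl := unfold vadd, vscale, cross, dot, zero3; cbv beta; cbn [c1 c2 c3 fst snd].

Lemma V3_eq a b : c1 a = c1 b -> c2 a = c2 b -> c3 a = c3 b -> a = b.
Proof. destruct a as [[a1 a2] a3], b as [[b1 b2] b3]; cbn; intros -> -> ->; reflexivity. Qed.

Ltac vring := match goal with
  | |- ?x = ?y :> V3 => apply V3_eq; vsimpl; ring
  | |- ?x = ?y => change (x = y :> R); vsimpl; ring
  end.

Lemma dot_comm a b : dot a b = dot b a.
Proof. vring. Qed.
Lemma dot_vaddl a b c : dot (vadd a b) c = dot a c + dot b c.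
Proof. vring. Qed.
Lemma dot_vaddr a b c : dot c (vadd a b) = dot c a + dot c b.
Proof. vring. Qed.
Lemma dot_vscalel k a c : dot (vscale k a) c = k * dot a c.
Proof. vring. Qed.
Lemma dot_vscaler k a c : dot c (vscale k a) = k * dot c a.
Proof. vring. Qed.
Lemma dot_cross_r a b : dot (cross a b) b = 0.
Proof. vring. Qed.
Lemma cross_cross_r a b c : cross a (cross b c) = vadd (vscale (dot a c) b) (vscale (- dot a b) c).
Proof. vring. Qed.
Lemma cross_cross_l a b c : cross (cross a b) c = vadd (vscale (dot a c) b) (vscale (- dot b c) a).
Proof. vring. Qed.
Lemma dot_cross_cross a b : dot (cross a b) (cross a b) = dot a a * dot b b - dot a b ^ 2.
Proof. vring. Qed.
Lemma cross_0l a : cross zero3 a = zero3.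
Proof. vring. Qed.
Lemma cross_0r a : cross a zero3 = zero3.
Proof. vring. Qed.

Lemma dot_self_ge0 w : 0 <= dot w w.
Proof. vsimpl; nra. Qed.

Lemma dot_self_gt0 w : w <> zero3 -> 0 < dot w w.
Proof.
  destruct w as [[a b] c]; vsimpl; intros Hw.
  destruct (Rle_lt_dec (a * a + b * b + c * c) 0) as [Hle | Hlt]; [|exact Hlt].
  exfalso; apply Hw.
  assert (a = 0) by nra; assert (b = 0) by nra; assert (c = 0) by nra; subst; reflexivity.
Qed.

Lemma vnorm_gt0 w : w <> zero3 -> 0 < vnorm w.
Proof. intros Hw; apply sqrt_lt_R0, dot_self_gt0, Hw. Qed.

Lemma vnorm_sq w : vnorm w ^ 2 = dot w w.
Proof. unfold vnorm; rewrite <- Rsqr_pow2; apply Rsqr_sqrt, dot_self_ge0. Qed.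

Lemma dot_vunit_vunit w : w <> zero3 -> dot (vunit w) (vunit w) = 1.
Proof.
  intros Hw; pose proof (vnorm_gt0 w Hw) as Hpos.
  unfold vunit; rewrite dot_vscalel, dot_vscaler, <- vnorm_sq; field; lra.
Qed.

(* Lagrange's identity makes [n x T] a unit vector orthogonal to both. *)
Lemma orthonormal_parseval w T n :
  dot T T = 1 -> dot n n = 1 -> dot T n = 0 ->
  dot w w = dot w T ^ 2 + dot w n ^ 2 + dot w (cross n T) ^ 2.
Proof.
  intros HT Hn HTn.
  assert (E : dot w (cross n T) ^ 2 =
    dot w w * (dot n n * dot T T - dot n T ^ 2) - dot w n * (dot w n * dot T T - dot n T * dot w T)
    + dot w T * (dot w n * dot n T - dot n n * dot w T)) by vring.
  rewrite E, HT, Hn, (dot_comm n T), HTn; ring.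
Qed.

Lemma cross_vscaler k a b : cross a (vscale k b) = vscale k (cross a b).
Proof. vring. Qed.
Lemma cross_vscalel k a b : cross (vscale k a) b = vscale k (cross a b).
Proof. vring. Qed.
Lemma vscale_vscale k l a : vscale k (vscale l a) = vscale (k * l) a.
Proof. vring. Qed.

Lemma vnorm_cross_orth p q : dot p q = 0 -> vnorm (cross p q) = vnorm p * vnorm q.
Proof.
  intros Hpq; unfold vnorm; rewrite dot_cross_cross, Hpq, <- sqrt_mult by apply dot_self_ge0.
  f_equal; ring.
Qed.

Lemma vscale_vnorm_vunit p : p <> zero3 -> vscale (vnorm p) (vunit p) = p.
Proof.
  intros Hp; pose proof (vnorm_gt0 p Hp); unfold vunit; rewrite vscale_vscale, Rinv_r by lra; vring.
Qed.

Lemma cross_vunit_cross_l p q : dot p q = 0 -> p <> zero3 -> q <> zero3 ->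
  cross (vunit (cross p q)) p = vscale (vnorm p / vnorm q) q.
Proof.
  intros Hpq Hp Hq; pose proof (vnorm_gt0 p Hp); pose proof (vnorm_gt0 q Hq).
  unfold vunit; rewrite cross_vscalel, cross_cross_l, (dot_comm q p), Hpq, vnorm_cross_orth,
    <- vnorm_sq by exact Hpq.
  apply V3_eq; vsimpl; field; lra.
Qed.

Lemma cross_vunit_cross_r p q : dot p q = 0 -> p <> zero3 -> q <> zero3 ->
  cross (vunit (cross p q)) q = vscale (- (vnorm q / vnorm p)) p.
Proof.
  intros Hpq Hp Hq; pose proof (vnorm_gt0 p Hp); pose proof (vnorm_gt0 q Hq).
  unfold vunit; rewrite cross_vscalel, cross_cross_l, Hpq, vnorm_cross_orth,
    <- vnorm_sq by exact Hpq.
  apply V3_eq; vsimpl; field; lra.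
Qed.

(** * Derivatives of vector-valued functions *)

Definition is_vderive (f : R -> V3) (t : R) (w : V3) : Prop :=
  is_derive (fun t => c1 (f t)) t (c1 w) /\ is_derive (fun t => c2 (f t)) t (c2 w) /\
  is_derive (fun t => c3 (f t)) t (c3 w).

Definition ex_vderive (f : R -> V3) (t : R) : Prop := exists w, is_vderive f t w.

Lemma is_vderive_vD f t w : is_vderive f t w -> vD f t = w.
Proof.
  intros (H1 & H2 & H3); apply is_derive_unique in H1, H2, H3; unfold vD.
  replace (Derive _ t) with (c1 w); replace (Derive _ t) with (c2 w);
    replace (Derive _ t) with (c3 w); auto.
  destruct w as [[a b] c]; reflexivity.
Qed.

Lemma vD_correct f t : ex_vderive f t -> is_vderive f t (vD f t).
Proof. intros [w Hw]; rewrite (is_vderive_vD _ _ _ Hw); exact Hw. Qed.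

Lemma is_vderive_unique f t w1 w2 : is_vderive f t w1 -> is_vderive f t w2 -> w1 = w2.
Proof. intros H1 H2; rewrite <- (is_vderive_vD _ _ _ H1); exact (is_vderive_vD _ _ _ H2). Qed.

Lemma is_derive_locally_const (f : R -> R) t c l :
  locally t (fun s => f s = c) -> is_derive f t l -> l = 0.
Proof.
  intros Hc Hf; apply (is_derive_unique f t l) in Hf; rewrite <- Hf.
  apply is_derive_unique, (is_derive_ext_loc (fun _ => c)); [|exact (is_derive_const c t)].
  eapply filter_imp; [|exact Hc]; intros s Hs; symmetry; exact Hs.
Qed.

Lemma is_vderive_ext_loc (f g : R -> V3) t w :
  locally t (fun s => f s = g s) -> is_vderive f t w -> is_vderive g t w.
Proof.
  intros Hfg (H1 & H2 & H3).
  assert (Hc : forall c : V3 -> R, locally t (fun s => c (f s) = c (g s))).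
  { intros c; eapply filter_imp; [|exact Hfg]; intros s ->; reflexivity. }
  split; [|split].
  - exact (is_derive_ext_loc _ _ t _ (Hc c1) H1).
  - exact (is_derive_ext_loc _ _ t _ (Hc c2) H2).
  - exact (is_derive_ext_loc _ _ t _ (Hc c3) H3).
Qed.

Lemma is_derive_Rmult (f g : R -> R) x df dg : is_derive f x df -> is_derive g x dg ->
  is_derive (fun t => f t * g t) x (df * g x + f x * dg).
Proof. intros Hf Hg; exact (is_derive_mult f g x df dg Hf Hg Rmult_comm). Qed.

Lemma is_derive_Rplus (f g : R -> R) x df dg : is_derive f x df -> is_derive g x dg ->
  is_derive (fun t => f t + g t) x (df + dg).
Proof. intros Hf Hg; exact (is_derive_plus f g x df dg Hf Hg). Qed.

Lemma is_derive_Rminus (f g : R -> R) x df dg : is_derive f x df -> is_derive g x dg ->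
  is_derive (fun t => f t - g t) x (df - dg).
Proof. intros Hf Hg; exact (is_derive_minus f g x df dg Hf Hg). Qed.

Lemma is_derive_eq (f : R -> R) x l l' : l = l' -> is_derive f x l -> is_derive f x l'.
Proof. intros <-; exact (fun H => H). Qed.

Lemma is_vderive_vadd f g t a b : is_vderive f t a -> is_vderive g t b ->
  is_vderive (fun t => vadd (f t) (g t)) t (vadd a b).
Proof.
  intros (A1 & A2 & A3) (B1 & B2 & B3); split; [|split].
  - exact (is_derive_Rplus _ _ _ _ _ A1 B1).
  - exact (is_derive_Rplus _ _ _ _ _ A2 B2).
  - exact (is_derive_Rplus _ _ _ _ _ A3 B3).
Qed.

Lemma is_vderive_vscale (h : R -> R) f t dh a : is_derive h t dh -> is_vderive f t a ->
  is_vderive (fun t => vscale (h t) (f t)) t (vadd (vscale dh (f t)) (vscale (h t) a)).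
Proof.
  intros Hh (A1 & A2 & A3); split; [|split].
  - exact (is_derive_Rmult _ _ _ _ _ Hh A1).
  - exact (is_derive_Rmult _ _ _ _ _ Hh A2).
  - exact (is_derive_Rmult _ _ _ _ _ Hh A3).
Qed.

Lemma is_vderive_cross f g t a b : is_vderive f t a -> is_vderive g t b ->
  is_vderive (fun t => cross (f t) (g t)) t (vadd (cross a (g t)) (cross (f t) b)).
Proof.
  intros (A1 & A2 & A3) (B1 & B2 & B3); split; [|split]; simpl.
  - eapply is_derive_eq;
      [|exact (is_derive_Rminus _ _ _ _ _
                 (is_derive_Rmult _ _ _ _ _ A2 B3) (is_derive_Rmult _ _ _ _ _ A3 B2))].
    vring.
  - eapply is_derive_eq;
      [|exact (is_derive_Rminus _ _ _ _ _
                 (is_derive_Rmult _ _ _ _ _ A3 B1) (is_derive_Rmult _ _ _ _ _ A1 B3))].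
    vring.
  - eapply is_derive_eq;
      [|exact (is_derive_Rminus _ _ _ _ _
                 (is_derive_Rmult _ _ _ _ _ A1 B2) (is_derive_Rmult _ _ _ _ _ A2 B1))].
    vring.
Qed.

Lemma is_derive_dot f g t a b : is_vderive f t a -> is_vderive g t b ->
  is_derive (fun t => dot (f t) (g t)) t (dot a (g t) + dot (f t) b).
Proof.
  intros (A1 & A2 & A3) (B1 & B2 & B3); unfold dot.
  eapply is_derive_eq; [|exact (is_derive_Rplus _ _ _ _ _
    (is_derive_Rplus _ _ _ _ _ (is_derive_Rmult _ _ _ _ _ A1 B1) (is_derive_Rmult _ _ _ _ _ A2 B2))
    (is_derive_Rmult _ _ _ _ _ A3 B3))].
  vring.
Qed.

Lemma is_vderive_comp (f : R -> V3) (phi : R -> R) s w a :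
  is_vderive f (phi s) w -> is_derive phi s a -> is_vderive (fun t => f (phi t)) s (vscale a w).
Proof.
  intros (H1 & H2 & H3) Hphi; split; [|split].
  - exact (is_derive_comp (fun t => c1 (f t)) phi s _ _ H1 Hphi).
  - exact (is_derive_comp (fun t => c2 (f t)) phi s _ _ H2 Hphi).
  - exact (is_derive_comp (fun t => c3 (f t)) phi s _ _ H3 Hphi).
Qed.

Lemma is_derive_comp_2d (F : R -> R -> R) (u v : R -> R) s du dv :
  diff2 F (u s) (v s) -> is_derive u s du -> is_derive v s dv ->
  is_derive (fun t => F (u t) (v t)) s
    (Derive (fun a => F a (v s)) (u s) * du + Derive (fun b => F (u s) b) (v s) * dv).
Proof.
  intros HF Hu Hv; apply is_derive_Reals; apply is_derive_Reals in Hu, Hv.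
  exact (derivable_pt_lim_comp_2d _ _ _ _ _ _ _ _ HF Hu Hv).
Qed.

Lemma is_vderive_comp_2d (F : R -> R -> V3) (u v : R -> R) s du dv :
  vdiff2 F (u s) (v s) -> is_derive u s du -> is_derive v s dv ->
  is_vderive (fun t => F (u t) (v t)) s
    (vadd (vscale du (pu F (u s) (v s))) (vscale dv (pv F (u s) (v s)))).
Proof.
  intros (H1 & H2 & H3) Hu Hv; split; [|split]; simpl.
  - eapply is_derive_eq; [|exact (is_derive_comp_2d _ _ _ _ _ _ H1 Hu Hv)]. unfold pu, pv, vD; vring.
  - eapply is_derive_eq; [|exact (is_derive_comp_2d _ _ _ _ _ _ H2 Hu Hv)]. unfold pu, pv, vD; vring.
  - eapply is_derive_eq; [|exact (is_derive_comp_2d _ _ _ _ _ _ H3 Hu Hv)]. unfold pu, pv, vD; vring.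
Qed.

Lemma is_vderive_vunit f t a : is_vderive f t a -> f t <> zero3 ->
  exists dh, is_vderive (fun t => vunit (f t)) t (vadd (vscale dh (f t)) (vscale (/ vnorm (f t)) a)).
Proof.
  intros Hf Hne.
  pose proof (is_derive_sqrt _ _ _ (is_derive_dot _ _ _ _ _ Hf Hf) (dot_self_gt0 _ Hne)) as Hn.
  pose proof (is_derive_inv _ _ _ Hn (Rgt_not_eq _ _ (vnorm_gt0 _ Hne))) as Hinv.
  eexists; exact (is_vderive_vscale _ _ _ _ _ Hinv Hf).
Qed.

Lemma is_vderive_orth f g t a b :
  locally t (fun s => dot (f s) (g s) = 0) -> is_vderive f t a -> is_vderive g t b ->
  dot a (g t) = - dot (f t) b.
Proof.
  intros Horth Hf Hg.
  pose proof (is_derive_locally_const _ _ _ _ Horth (is_derive_dot _ _ _ _ _ Hf Hg)); lra.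
Qed.

Lemma is_vderive_unit f t a :
  locally t (fun s => dot (f s) (f s) = 1) -> is_vderive f t a -> dot a (f t) = 0.
Proof.
  intros Hunit Hf.
  pose proof (is_derive_locally_const _ _ _ _ Hunit (is_derive_dot _ _ _ _ _ Hf Hf)) as H.
  rewrite (dot_comm (f t) a) in H; lra.
Qed.

Lemma is_vderive_pu F U W : vdiff2 F U W -> is_vderive (fun t => F t W) U (pu F U W).
Proof.
  intros HF.
  pose proof (is_vderive_comp_2d F (fun t => t) (fun _ => W) U 1 0 HF
    (is_derive_id U) (is_derive_const W U)) as H.
  replace (pu F U W) with (vadd (vscale 1 (pu F U W)) (vscale 0 (pv F U W))) by vring; exact H.
Qed.

Lemma is_vderive_pv F U W : vdiff2 F U W -> is_vderive (fun t => F U t) W (pv F U W).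
Proof.
  intros HF.
  pose proof (is_vderive_comp_2d F (fun _ => U) (fun t => t) W 0 1 HF
    (is_derive_const U W) (is_derive_id W)) as H.
  replace (pv F U W) with (vadd (vscale 0 (pu F U W)) (vscale 1 (pv F U W))) by vring; exact H.
Qed.

Lemma locally_slice_u (D : R * R -> Prop) U W : open D -> D (U, W) -> locally U (fun t => D (t, W)).
Proof.
  intros HD HUW; destruct (HD _ HUW) as [eps He]; exists eps; intros t Ht.
  apply He; split; [exact Ht | apply ball_center].
Qed.

Lemma locally_slice_v (D : R * R -> Prop) U W : open D -> D (U, W) -> locally W (fun t => D (U, t)).
Proof.
  intros HD HUW; destruct (HD _ HUW) as [eps He]; exists eps; intros t Ht.
  apply He; split; [apply ball_center | exact Ht].
Qed.

(** * Curves on orthogonally parametrised surfaces *)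

Definition eu (X : R -> R -> V3) (u v : R -> R) (t : R) : V3 := vunit (pu X (u t) (v t)).
Definition ev (X : R -> R -> V3) (u v : R -> R) (t : R) : V3 := vunit (pv X (u t) (v t)).

Section RegularSurface.

Variables (X : R -> R -> V3) (D : R * R -> Prop).
Hypothesis HX : regular_surface X D.

Lemma pu_neq0 U W : D (U, W) -> pu X U W <> zero3.
Proof.
  intros HUW E; destruct (proj2 HX U W HUW) as (_ & _ & _ & Hcr).
  apply Hcr; rewrite E; apply cross_0l.
Qed.

Lemma pv_neq0 U W : D (U, W) -> pv X U W <> zero3.
Proof.
  intros HUW E; destruct (proj2 HX U W HUW) as (_ & _ & _ & Hcr).
  apply Hcr; rewrite E; apply cross_0r.
Qed.

Hypothesis HO : orthogonal_param X D.

Lemma orthogonal_param_deriv U W : D (U, W) ->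
  dot (pv (pu X) U W) (pv X U W) = - dot (pu X U W) (pv (pv X) U W) /\
  dot (pu (pu X) U W) (pv X U W) = - dot (pu X U W) (pu (pv X) U W).
Proof.
  intros HUW; destruct (proj2 HX U W HUW) as (_ & Hpu & Hpv & _).
  split.
  - apply (is_vderive_orth (fun t => pu X U t) (fun t => pv X U t) W).
    + eapply filter_imp; [|exact (locally_slice_v D U W (proj1 HX) HUW)]; exact (fun t => HO U t).
    + exact (is_vderive_pv _ _ _ Hpu).
    + exact (is_vderive_pv _ _ _ Hpv).
  - apply (is_vderive_orth (fun t => pu X t W) (fun t => pv X t W) U).
    + eapply filter_imp; [|exact (locally_slice_u D U W (proj1 HX) HUW)]; exact (fun t => HO t W).
    + exact (is_vderive_pu _ _ _ Hpu).
    + exact (is_vderive_pu _ _ _ Hpv).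
Qed.

Lemma kg_u_orth U W : D (U, W) ->
  kg_u X U W = dot (pu (pu X) U W) (pv X U W) / (vnorm (pu X U W) ^ 2 * vnorm (pv X U W)).
Proof.
  intros HUW; pose proof (vnorm_gt0 _ (pu_neq0 _ _ HUW)); pose proof (vnorm_gt0 _ (pv_neq0 _ _ HUW)).
  unfold kg_u, snormal; change (vD (fun t => pu X t W) U) with (pu (pu X) U W).
  rewrite cross_vunit_cross_l, dot_vscaler by auto using pu_neq0, pv_neq0.
  field; lra.
Qed.

Lemma kg_v_orth U W : D (U, W) ->
  kg_v X U W = - dot (pv (pv X) U W) (pu X U W) / (vnorm (pu X U W) * vnorm (pv X U W) ^ 2).
Proof.
  intros HUW; pose proof (vnorm_gt0 _ (pu_neq0 _ _ HUW)); pose proof (vnorm_gt0 _ (pv_neq0 _ _ HUW)).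
  unfold kg_v, snormal; change (vD (fun t => pv X U t) W) with (pv (pv X) U W).
  rewrite cross_vunit_cross_r, dot_vscaler by auto using pu_neq0, pv_neq0.
  field; lra.
Qed.

Section CurveOnSurface.

Variables (I : R -> Prop) (u v : R -> R).
Hypothesis HC : unit_speed_curve_on X D I u v.

Local Notation T := (tangent X u v).
Local Notation n := (cnormal X u v).
Local Notation g := (cbinormal X u v).

Lemma curve_in_domain t : I t -> D (u t, v t).
Proof. intros It; exact (proj1 (proj2 HC t It)). Qed.

Lemma locally_on_curve (P : R -> Prop) s : (forall t, I t -> P t) -> I s -> locally s P.
Proof. intros HP; exact (locally_open I P (proj1 HC) HP s). Qed.

Lemma is_vderive_along F s : I s -> vdiff2 F (u s) (v s) ->
  is_vderive (fun t => F (u t) (v t)) s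
    (vadd (vscale (Derive u s) (pu F (u s) (v s))) (vscale (Derive v s) (pv F (u s) (v s)))).
Proof.
  intros Is HF; destruct (proj2 HC s Is) as (_ & Hu & Hv & _).
  exact (is_vderive_comp_2d F u v s _ _ HF (Derive_correct _ _ Hu) (Derive_correct _ _ Hv)).
Qed.

Lemma surface_derivs_along t : I t ->
  vdiff2 X (u t) (v t) /\ vdiff2 (pu X) (u t) (v t) /\ vdiff2 (pv X) (u t) (v t).
Proof.
  intros It; destruct (proj2 HX _ _ (curve_in_domain t It)) as (H1 & H2 & H3 & _); auto.
Qed.

Lemma tangent_decomp t : I t ->
  T t = vadd (vscale (Derive u t) (pu X (u t) (v t))) (vscale (Derive v t) (pv X (u t) (v t))).
Proof.
  intros It; apply is_vderive_vD, is_vderive_along; [exact It | apply surface_derivs_along, It].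
Qed.

Lemma is_vderive_curve t : I t -> is_vderive (curve X u v) t (T t).
Proof.
  intros It; rewrite tangent_decomp by exact It.
  apply is_vderive_along; [exact It | apply surface_derivs_along, It].
Qed.

Lemma tangent_unit t : I t -> dot (T t) (T t) = 1.
Proof.
  intros It; rewrite <- vnorm_sq, (proj2 (proj2 (proj2 (proj2 (proj2 (proj2 HC t It)))))); ring.
Qed.

Lemma cnormal_unit t : I t -> dot (n t) (n t) = 1.
Proof.
  intros It; apply dot_vunit_vunit.
  exact (proj2 (proj2 (proj2 (proj2 HX _ _ (curve_in_domain t It))))).
Qed.

Lemma tangent_cnormal_orth t : I t -> dot (T t) (n t) = 0.
Proof. intros It; rewrite tangent_decomp by exact It; unfold cnormal, snormal, vunit; vring. Qed.

Lemma cbinormal_unit t : I t -> dot (g t) (g t) = 1.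
Proof.
  intros It; unfold cbinormal.
  rewrite dot_cross_cross, tangent_unit, cnormal_unit, dot_comm, tangent_cnormal_orth by exact It; ring.
Qed.

Lemma cnormal_cross t : I t -> n t = cross (T t) (g t).
Proof.
  intros It; unfold cbinormal.
  rewrite cross_cross_r, tangent_unit, tangent_cnormal_orth by exact It; vring.
Qed.

Lemma ex_vderive_tangent s : I s -> ex_vderive T s.
Proof.
  intros Is; destruct (proj2 HC s Is) as (_ & _ & _ & Hdu & Hdv & _).
  destruct (surface_derivs_along s Is) as (_ & Hpu & Hpv).
  eexists; apply (is_vderive_ext_loc
    (fun t => vadd (vscale (Derive u t) (pu X (u t) (v t))) (vscale (Derive v t) (pv X (u t) (v t))))).
  - apply locally_on_curve; [|exact Is]; intros t It; symmetry; exact (tangent_decomp t It).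
  - apply is_vderive_vadd; apply is_vderive_vscale.
    + exact (Derive_correct _ _ Hdu).
    + exact (is_vderive_along _ s Is Hpu).
    + exact (Derive_correct _ _ Hdv).
    + exact (is_vderive_along _ s Is Hpv).
Qed.

Lemma ex_vderive_cbinormal s : I s -> ex_vderive g s.
Proof.
  intros Is; destruct (surface_derivs_along s Is) as (_ & Hpu & Hpv).
  destruct (is_vderive_vunit _ _ _
    (is_vderive_cross _ _ _ _ _ (is_vderive_along _ s Is Hpu) (is_vderive_along _ s Is Hpv))
    (proj2 (proj2 (proj2 (proj2 HX _ _ (curve_in_domain s Is)))))) as [dh Hn].
  eexists; exact (is_vderive_cross _ _ _ _ _ Hn (vD_correct _ _ (ex_vderive_tangent s Is))).
Qed.

Lemma geod_curv_cbinormal s : I s -> geod_curv X u v s = - dot (vD g s) (T s).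
Proof.
  intros Is; unfold geod_curv.
  assert (Horth : forall t, dot (T t) (g t) = 0).
  { intros t; unfold cbinormal; rewrite dot_comm; apply dot_cross_r. }
  rewrite (is_vderive_orth T g s _ _ (filter_forall _ Horth)
    (vD_correct _ _ (ex_vderive_tangent s Is)) (vD_correct _ _ (ex_vderive_cbinormal s Is))).
  rewrite dot_comm; ring.
Qed.

Lemma cbinormal_deriv_orth s : I s -> dot (vD g s) (g s) = 0.
Proof.
  intros Is; apply is_vderive_unit; [|exact (vD_correct _ _ (ex_vderive_cbinormal s Is))].
  exact (locally_on_curve _ s cbinormal_unit Is).
Qed.

(* [g' = - k_g T + tau_g n]. *)
Lemma dot_cbinormal_deriv s : I s ->
  dot (vD g s) (vD g s) = geod_curv X u v s ^ 2 + geod_tors X u v s ^ 2.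
Proof.
  intros Is; rewrite (orthonormal_parseval (vD g s) (T s) (n s)), geod_curv_cbinormal
    by first [exact Is | apply tangent_unit, Is | apply cnormal_unit, Is | apply tangent_cnormal_orth, Is].
  fold (g s); rewrite cbinormal_deriv_orth by exact Is; unfold geod_tors; ring.
Qed.

Local Notation e1 := (eu X u v).
Local Notation e2 := (ev X u v).

Lemma eu_unit t : I t -> dot (e1 t) (e1 t) = 1.
Proof. intros It; apply dot_vunit_vunit, pu_neq0, curve_in_domain, It. Qed.

Lemma ev_unit t : I t -> dot (e2 t) (e2 t) = 1.
Proof. intros It; apply dot_vunit_vunit, pv_neq0, curve_in_domain, It. Qed.

Lemma eu_ev_orth t : I t -> dot (e1 t) (e2 t) = 0.
Proof.
  intros It; unfold eu, ev, vunit; rewrite dot_vscalel, dot_vscaler, HO by exact (curve_in_domain t It); ring.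
Qed.

Lemma cross_cnormal_eu t : I t -> cross (n t) (e1 t) = e2 t.
Proof.
  intros It; pose proof (curve_in_domain t It) as Ht.
  pose proof (vnorm_gt0 _ (pu_neq0 _ _ Ht)); pose proof (vnorm_gt0 _ (pv_neq0 _ _ Ht)).
  unfold cnormal, snormal, eu, ev; unfold vunit at 2 3.
  rewrite cross_vscaler, cross_vunit_cross_l, vscale_vscale
    by first [exact (HO _ _ Ht) | exact (pu_neq0 _ _ Ht) | exact (pv_neq0 _ _ Ht)].
  f_equal; field; lra.
Qed.

Lemma cross_cnormal_ev t : I t -> cross (n t) (e2 t) = vscale (-1) (e1 t).
Proof.
  intros It; pose proof (curve_in_domain t It) as Ht.
  pose proof (vnorm_gt0 _ (pu_neq0 _ _ Ht)); pose proof (vnorm_gt0 _ (pv_neq0 _ _ Ht)).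
  unfold cnormal, snormal, eu, ev; unfold vunit at 2 3.
  rewrite cross_vscaler, cross_vunit_cross_r, vscale_vscale
    by first [exact (HO _ _ Ht) | exact (pu_neq0 _ _ Ht) | exact (pv_neq0 _ _ Ht)].
  rewrite vscale_vscale; f_equal; field; lra.
Qed.

Lemma is_vderive_eu s : I s -> exists dh, is_vderive e1 s
  (vadd (vscale dh (pu X (u s) (v s)))
        (vscale (/ vnorm (pu X (u s) (v s)))
           (vadd (vscale (Derive u s) (pu (pu X) (u s) (v s)))
                 (vscale (Derive v s) (pv (pu X) (u s) (v s)))))).
Proof.
  intros Is; exact (is_vderive_vunit (fun t => pu X (u t) (v t)) s _
    (is_vderive_along _ s Is (proj1 (proj2 (surface_derivs_along s Is))))
    (pu_neq0 _ _ (curve_in_domain s Is))).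
Qed.

Lemma ex_vderive_eu s : I s -> ex_vderive e1 s.
Proof. intros Is; destruct (is_vderive_eu s Is) as [dh Hdh]; eexists; exact Hdh. Qed.

Lemma ex_vderive_ev s : I s -> ex_vderive e2 s.
Proof.
  intros Is; destruct (is_vderive_vunit (fun t => pv X (u t) (v t)) s _
    (is_vderive_along _ s Is (proj2 (proj2 (surface_derivs_along s Is))))
    (pv_neq0 _ _ (curve_in_domain s Is))) as [dh Hdh].
  eexists; exact Hdh.
Qed.

Lemma dot_deriv_eu_ev s : I s ->
  dot (vD e1 s) (e2 s)
  = (Derive u s * dot (pu (pu X) (u s) (v s)) (pv X (u s) (v s))
     + Derive v s * dot (pv (pu X) (u s) (v s)) (pv X (u s) (v s)))
    / (vnorm (pu X (u s) (v s)) * vnorm (pv X (u s) (v s))).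
Proof.
  intros Is; pose proof (curve_in_domain s Is) as Hs.
  pose proof (vnorm_gt0 _ (pu_neq0 _ _ Hs)); pose proof (vnorm_gt0 _ (pv_neq0 _ _ Hs)).
  destruct (is_vderive_eu s Is) as [dh Hdh]; rewrite (is_vderive_vD _ _ _ Hdh).
  unfold ev, vunit.
  rewrite !dot_vaddl, !dot_vscalel, !dot_vscaler, dot_vaddl, !dot_vscalel, (HO _ _ Hs); field; lra.
Qed.

Variable sigma : R -> R.
Hypothesis HA : angle_fn X u v I sigma.

Lemma angle_cos_sin t : I t ->
  cos (sigma t) = Derive u t * vnorm (pu X (u t) (v t)) /\
  sin (sigma t) = Derive v t * vnorm (pv X (u t) (v t)).
Proof.
  intros It; pose proof (curve_in_domain t It) as Ht.
  pose proof (vnorm_gt0 _ (pu_neq0 _ _ Ht)); pose proof (vnorm_gt0 _ (pv_neq0 _ _ Ht)).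
  destruct (HA t It) as (_ & -> & ->); rewrite tangent_decomp by exact It.
  unfold vunit; rewrite !dot_vscaler, !dot_vaddl, !dot_vscalel, (dot_comm (pv X _ _)), (HO _ _ Ht),
    <- !vnorm_sq.
  split; field; lra.
Qed.

Lemma tangent_frame t : I t -> T t = vadd (vscale (cos (sigma t)) (e1 t)) (vscale (sin (sigma t)) (e2 t)).
Proof.
  intros It; pose proof (curve_in_domain t It) as Ht.
  destruct (angle_cos_sin t It) as [-> ->]; rewrite tangent_decomp by exact It.
  unfold eu, ev; rewrite <- !vscale_vscale, !vscale_vnorm_vunit
    by first [exact (pu_neq0 _ _ Ht) | exact (pv_neq0 _ _ Ht)].
  reflexivity.
Qed.

Lemma cbinormal_frame t : I t ->
  g t = vadd (vscale (cos (sigma t)) (e2 t)) (vscale (- sin (sigma t)) (e1 t)).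
Proof.
  intros It; unfold cbinormal; rewrite tangent_frame by exact It.
  replace (cross (n t) (vadd (vscale (cos (sigma t)) (e1 t)) (vscale (sin (sigma t)) (e2 t))))
    with (vadd (vscale (cos (sigma t)) (cross (n t) (e1 t))) (vscale (sin (sigma t)) (cross (n t) (e2 t))))
    by vring.
  rewrite cross_cnormal_eu, cross_cnormal_ev by exact It; vring.
Qed.

Lemma geod_curv_frame s : I s -> geod_curv X u v s = Derive sigma s + dot (vD e1 s) (e2 s).
Proof.
  intros Is; destruct (HA s Is) as [Hsig _].
  pose proof (vD_correct _ _ (ex_vderive_eu s Is)) as He1.
  pose proof (vD_correct _ _ (ex_vderive_ev s Is)) as He2.
  set (e1' := vD e1 s) in *; set (e2' := vD e2 s) in *; set (sg' := Derive sigma s).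
  assert (HT : is_vderive T s
    (vadd (vadd (vscale (sg' * - sin (sigma s)) (e1 s)) (vscale (cos (sigma s)) e1'))
          (vadd (vscale (sg' * cos (sigma s)) (e2 s)) (vscale (sin (sigma s)) e2')))).
  { apply (is_vderive_ext_loc
      (fun t => vadd (vscale (cos (sigma t)) (e1 t)) (vscale (sin (sigma t)) (e2 t))) T s).
    - apply locally_on_curve; [|exact Is]; intros t It; symmetry; exact (tangent_frame t It).
    - pose proof (Derive_correct _ _ Hsig) as Hsg.
      apply is_vderive_vadd.
      + exact (is_vderive_vscale (fun t => cos (sigma t)) e1 s _ _
          (is_derive_comp cos sigma s _ _ (is_derive_cos _) Hsg) He1).
      + exact (is_vderive_vscale (fun t => sin (sigma t)) e2 s _ _
          (is_derive_comp sin sigma s _ _ (is_derive_sin _) Hsg) He2). }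
  assert (Hunit1 : dot e1' (e1 s) = 0)
    by exact (is_vderive_unit _ _ _ (locally_on_curve _ s eu_unit Is) He1).
  assert (Hunit2 : dot e2' (e2 s) = 0)
    by exact (is_vderive_unit _ _ _ (locally_on_curve _ s ev_unit Is) He2).
  assert (Hskew : dot e1' (e2 s) = - dot (e1 s) e2')
    by exact (is_vderive_orth _ _ _ _ _ (locally_on_curve _ s eu_ev_orth Is) He1 He2).
  unfold geod_curv; rewrite (is_vderive_vD _ _ _ HT), cbinormal_frame by exact Is.
  rewrite !dot_vaddl, !dot_vscalel, !dot_vaddr, !dot_vscaler.
  rewrite (dot_comm (e2 s) (e1 s)), (dot_comm e2' (e1 s)), eu_unit, ev_unit, eu_ev_orth, Hunit1, Hunit2, Hskew
    by exact Is.
  pose proof (sin2_cos2 (sigma s)) as Hpyth; unfold Rsqr in Hpyth.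
  transitivity ((sg' - dot (e1 s) e2') * (sin (sigma s) * sin (sigma s) + cos (sigma s) * cos (sigma s)));
    [ring | rewrite Hpyth; ring].
Qed.

Lemma liouville_formula s : I s -> liouville X u v sigma s = geod_curv X u v s.
Proof.
  intros Is; pose proof (curve_in_domain s Is) as Hs.
  pose proof (vnorm_gt0 _ (pu_neq0 _ _ Hs)); pose proof (vnorm_gt0 _ (pv_neq0 _ _ Hs)).
  destruct (angle_cos_sin s Is) as [Hcos Hsin].
  unfold liouville; rewrite geod_curv_frame, dot_deriv_eu_ev, kg_u_orth, kg_v_orth, Hcos, Hsin,
    (proj1 (orthogonal_param_deriv _ _ Hs)), (dot_comm (pv (pv X) _ _)) by assumption.
  field; lra.
Qed.

End CurveOnSurface.

End RegularSurface.

(** * Bertrand D-pairs *)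

Section BertrandPair.

Variables (X X1 : R -> R -> V3) (D D1 : R * R -> Prop) (I I1 : R -> Prop)
  (u v u1 v1 phi : R -> R) (lam : R).
Hypotheses (HX : regular_surface X D) (HX1 : regular_surface X1 D1)
  (HC : unit_speed_curve_on X D I u v) (HC1 : unit_speed_curve_on X1 D1 I1 u1 v1)
  (HB : bertrand_D_pair X u v I X1 u1 v1 I1 phi lam).

Local Notation g1 := (cbinormal X1 u1 v1).

Lemma bertrand_tangent s : I s ->
  tangent X u v s = vadd (vscale (Derive phi s) (tangent X1 u1 v1 (phi s)))
                         (vscale (lam * Derive phi s) (vD g1 (phi s))).
Proof.
  intros Is; destruct (proj2 HB s Is) as (I1s & Hphi & _).
  apply (is_vderive_unique (curve X u v) s); [exact (is_vderive_curve X D HX I u v HC s Is)|].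
  apply (is_vderive_ext_loc (fun t => vadd (curve X1 u1 v1 (phi t)) (vscale lam (g1 (phi t)))) _ s).
  - apply (locally_on_curve _ _ _ _ _ HC); [|exact Is]; intros t It.
    symmetry; exact (proj2 (proj2 (proj2 (proj2 HB t It)))).
  - pose proof (Derive_correct _ _ Hphi) as Ha.
    replace (vscale (lam * Derive phi s) (vD g1 (phi s)))
      with (vadd (vscale 0 (g1 (phi s))) (vscale lam (vscale (Derive phi s) (vD g1 (phi s))))) by vring.
    apply is_vderive_vadd.
    + exact (is_vderive_comp _ _ _ _ _ (is_vderive_curve X1 D1 HX1 I1 u1 v1 HC1 _ I1s) Ha).
    + exact (is_vderive_vscale (fun _ => lam) _ s _ _ (is_derive_const lam s)
        (is_vderive_comp _ _ _ _ _ (vD_correct _ _ (ex_vderive_cbinormal X1 D1 HX1 I1 u1 v1 HC1 _ I1s)) Ha)).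
Qed.

Lemma bertrand_cbinormal_deriv s : I s ->
  vD (cbinormal X u v) s = vscale (Derive phi s) (vD g1 (phi s)).
Proof.
  intros Is; destruct (proj2 HB s Is) as (I1s & Hphi & _).
  apply is_vderive_vD, (is_vderive_ext_loc (fun t => g1 (phi t))).
  - apply (locally_on_curve _ _ _ _ _ HC); [|exact Is]; intros t It.
    symmetry; exact (proj1 (proj2 (proj2 (proj2 HB t It)))).
  - exact (is_vderive_comp _ _ _ _ _ (vD_correct _ _ (ex_vderive_cbinormal X1 D1 HX1 I1 u1 v1 HC1 _ I1s))
      (Derive_correct _ _ Hphi)).
Qed.

Local Notation k1 := (geod_curv X1 u1 v1).
Local Notation tau1 := (geod_tors X1 u1 v1).

Lemma bertrand_speed s : I s ->
  Derive phi s ^ 2 * (1 - 2 * lam * k1 (phi s) + lam ^ 2 * (k1 (phi s) ^ 2 + tau1 (phi s) ^ 2)) = 1.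
Proof.
  intros Is; destruct (proj2 HB s Is) as (I1s & _).
  (* The [1] inside the bracket is |T1|^2, the one on the right is |T|^2. *)
  rewrite <- (dot_cbinormal_deriv _ _ HX1 _ _ _ HC1 _ I1s), (geod_curv_cbinormal _ _ HX1 _ _ _ HC1 _ I1s),
    <- (tangent_unit _ _ _ _ _ HC1 _ I1s) at 1.
  rewrite <- (tangent_unit _ _ _ _ _ HC s Is), bertrand_tangent by exact Is.
  vring.
Qed.

Lemma bertrand_geod_curv s : I s ->
  geod_curv X u v s = - Derive phi s ^ 2 * (- k1 (phi s) + lam * (k1 (phi s) ^ 2 + tau1 (phi s) ^ 2)).
Proof.
  intros Is; destruct (proj2 HB s Is) as (I1s & _).
  rewrite (geod_curv_cbinormal _ _ HX _ _ _ HC s Is), bertrand_cbinormal_deriv, bertrand_tangent,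
    <- (dot_cbinormal_deriv _ _ HX1 _ _ _ HC1 _ I1s), (geod_curv_cbinormal _ _ HX1 _ _ _ HC1 _ I1s)
    by exact Is.
  vring.
Qed.

Lemma bertrand_geod_tors s : I s -> geod_tors X u v s = Derive phi s ^ 2 * tau1 (phi s).
Proof.
  intros Is; destruct (proj2 HB s Is) as (I1s & _ & Hg & _).
  unfold geod_tors; rewrite (cnormal_cross _ _ HX _ _ _ HC s Is), (cnormal_cross _ _ HX1 _ _ _ HC1 _ I1s),
    bertrand_cbinormal_deriv, bertrand_tangent, Hg by exact Is.
  vring.
Qed.

End BertrandPair.

Lemma bertrand_curvature_identity a lam k t :
  a ^ 2 * (1 - 2 * lam * k + lam ^ 2 * (k ^ 2 + t ^ 2)) = 1 ->
  - a ^ 2 * (- k + lam * (k ^ 2 + t ^ 2)) - k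
  = lam * (- a ^ 2 * (- k + lam * (k ^ 2 + t ^ 2)) * k - a ^ 2 * t * t).
Proof.
  intros Hspeed.
  assert (E : - a ^ 2 * (- k + lam * (k ^ 2 + t ^ 2)) - k
              - lam * (- a ^ 2 * (- k + lam * (k ^ 2 + t ^ 2)) * k - a ^ 2 * t * t)
              = k * (a ^ 2 * (1 - 2 * lam * k + lam ^ 2 * (k ^ 2 + t ^ 2)) - 1)) by ring.
  rewrite Hspeed in E; lra.
Qed.

Theorem corollary2 (X X1 : R -> R -> V3) (D D1 : R * R -> Prop) (I I1 : R -> Prop)
    (u v u1 v1 sigma sigma1 phi : R -> R) (lam : R) :
  regular_surface X D -> orthogonal_param X D ->
  regular_surface X1 D1 -> orthogonal_param X1 D1 ->
  unit_speed_curve_on X D I u v -> unit_speed_curve_on X1 D1 I1 u1 v1 ->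
  angle_fn X u v I sigma -> angle_fn X1 u1 v1 I1 sigma1 ->
  bertrand_D_pair X u v I X1 u1 v1 I1 phi lam ->
  forall s, I s ->
    liouville X u v sigma s - liouville X1 u1 v1 sigma1 (phi s)
    = lam * (liouville X u v sigma s * liouville X1 u1 v1 sigma1 (phi s)
             - geod_tors X u v s * geod_tors X1 u1 v1 (phi s)).
Proof.
  intros HX HO HX1 HO1 HC HC1 HA HA1 HB s Is.
  destruct (proj2 HB s Is) as (I1s & _).
  rewrite (liouville_formula _ _ HX HO _ _ _ HC _ HA s Is),
    (liouville_formula _ _ HX1 HO1 _ _ _ HC1 _ HA1 _ I1s),
    (bertrand_geod_curv _ _ _ _ _ _ _ _ _ _ _ _ HX HX1 HC HC1 HB s Is),
    (bertrand_geod_tors _ _ _ _ _ _ _ _ _ _ _ _ HX HX1 HC HC1 HB s Is).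
  exact (bertrand_curvature_identity _ _ _ _ (bertrand_speed _ _ _ _ _ _ _ _ _ _ _ _ HX HX1 HC HC1 HB s Is)).
Qed.
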